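(* Let $0<p<1$ and let $r$ be a positive integer. A bounded row vector $\vec x=(\dots,x_{-2},x_{-1},x_0,x_1,x_2,\dots)$ (indexed by the integers) belongs to $\mathrm{rowcone}(\{\mathcal{M}_{DNB(p,r)}\})$ if for all integers $k$, $$\sum_{j=-r}^{r}(-1)^j f_B\!\left(j;\tfrac{p}{1+p},r\right)x_{k+j}\ \ge\ 0,$$ where $f_B(\cdot;\frac{p}{1+p},r)$ is the probability mass function of $X-Y$ for independent $X,Y$ having the Binomial distribution with success probability $\frac{p}{1+p}$ and $r$ trials.
   Context: The negative binomial NB$(p,r)$ distribution has mass $\binom{k+r-1}{k}p^k(1-p)^r$ on nonnegative integers $k$. $\mathcal{M}_{DNB(p,r)}$ (differenced negative binomial mechanism) is the algorithm with input domain and range the integers $\mathbb{Z}$ that adds $X-Y$ to its input, where $X,Y$ are independent NB$(p,r)$ random variables. An algorithm is identified with its output probabilities. For algorithms $\mathcal{M}$, $\mathcal{A}$ with $\mathrm{range}(\mathcal{M})\subseteq\mathrm{domain}(\mathcal{A})$ and independent randomness, $\mathcal{A}\circ\mathcal{M}$ runs $\mathcal{M}$ then $\mathcal{A}$ on its output. $\mathrm{CNF}(\mathrm{Priv})$ of a set of algorithms with domain $\mathbb{Z}$ is the smallest set $S$ containing $\mathrm{Priv}$ such that $\mathcal{M}\in S$ implies $\mathcal{A}\circ\mathcal{M}\in S$ for every such $\mathcal{A}$, and $\mathcal{M}_1,\mathcal{M}_2\in S$, $t\in[0,1]$ implies that the algorithm running $\mathcal{M}_1$ with probability $t$ and $\mathcal{M}_2$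 with probability $1-t$ is in $S$. $\mathrm{rowcone}(\mathrm{Priv})=\{(c\,P[\mathcal{M}(n)=\omega])_{n\in\mathbb{Z}} : c\ge0,\ \mathcal{M}\in\mathrm{CNF}(\mathrm{Priv}),\ \omega\in\mathrm{range}(\mathcal{M})\}$. *)

From HB Require Import structures.
From mathcomp Require Import all_boot all_order all_algebra.
From mathcomp Require Import all_classical all_reals.
From mathcomp Require Import ereal esum.
Set Implicit Arguments. Unset Strict Implicit. Unset Printing Implicit Defensive.
Import Order.TTheory GRing.Theory Num.Theory.
Local Open Scope classical_set_scope.
Local Open Scope ring_scope.

(* An algorithm with input domain Z and (discrete) range Omega is identified
   with its output probabilities: M n w = P[M(n) = w]. *)
Definition is_alg (R : realType) (Omega : choiceType) (M : int -> Omega -> R) : Prop :=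
  forall n : int, (forall w, 0 <= M n w) /\ (\esum_(w in setT) (M n w)%:E = 1%E).

Definition nb_pmf (R : realType) (p : R) (r k : nat) : R :=
  ('C(k + r - 1, k))%:R * p ^+ k * (1 - p) ^+ r.

Definition dnb_pmf (R : realType) (p : R) (r : nat) (d : int) : R :=
  fine (\esum_(ij in [set ij : nat * nat | (ij.1%:Z - ij.2%:Z)%R = d])
          (nb_pmf p r ij.1 * nb_pmf p r ij.2)%:E).

Definition M_DNB (R : realType) (p : R) (r : nat) : int -> int -> R :=
  fun n w => dnb_pmf p r (w - n).

Definition postproc (R : realType) (Omega Omega' : choiceType)
  (A : Omega -> Omega' -> R) (M : int -> Omega -> R) : int -> Omega' -> R :=
  fun n w' => fine (\esum_(w in setT) (M n w * A w w')%:E).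

Definition is_kernel (R : realType) (Omega Omega' : choiceType)
  (A : Omega -> Omega' -> R) : Prop :=
  forall w, (forall w', 0 <= A w w') /\ (\esum_(w' in setT) (A w w')%:E = 1%E).

Inductive CNF_DNB (R : realType) (p : R) (r : nat) :
    forall (Omega : choiceType), (int -> Omega -> R) -> Prop :=
  | CNF_base : @CNF_DNB R p r int (M_DNB p r)
  | CNF_post : forall (Omega Omega' : choiceType) (M : int -> Omega -> R)
      (A : Omega -> Omega' -> R),
      @CNF_DNB R p r Omega M -> is_kernel A ->
      @CNF_DNB R p r Omega' (postproc A M)
  | CNF_mix : forall (Omega : choiceType) (M1 M2 : int -> Omega -> R) (t : R),
      @CNF_DNB R p r Omega M1 -> @CNF_DNB R p r Omega M2 -> 0 <= t <= 1 ->
      @CNF_DNB R p r Omega (fun n w => t * M1 n w + (1 - t) * M2 n w).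

Definition rowcone_DNB (R : realType) (p : R) (r : nat) (x : int -> R) : Prop :=
  exists (c : R) (Omega : choiceType) (M : int -> Omega -> R) (w : Omega),
    0 <= c /\ @CNF_DNB R p r Omega M /\ (forall n, x n = c * M n w).

Definition binom_pmf (R : realType) (q : R) (r k : nat) : R :=
  ('C(r, k))%:R * q ^+ k * (1 - q) ^+ (r - k).

Definition fB (R : realType) (q : R) (r : nat) (j : int) : R :=
  \sum_(i < r.+1) \sum_(l < r.+1)
     (if (i%:Z - l%:Z)%R == j then binom_pmf q r i * binom_pmf q r l else 0).

From HB Require Import structures.
From mathcomp Require Import all_boot all_order all_algebra.
From mathcomp Require Import all_classical all_reals.
From mathcomp Require Import ereal esum.
From mathcomp Require Import ring lra zify finmap.
Set Implicit Arguments. Unset Strict Implicit. Unset Printing Implicit Defensive.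
Import Order.TTheory GRing.Theory Num.Theory.
Local Open Scope ring_scope.
Local Open Scope classical_set_scope.

(* The NB(p, r) mass function has generating function ((1 - p) / (1 - p z))^r,
   so convolving it with the coefficients C(r, i) (-p)^i of (1 - p z)^r leaves
   (1 - p)^r times the unit mass at 0.  Hence the finite signed kernel
   beta(i, l) = C(r, i) (-p)^i C(r, l) (-p)^l, the coefficients of
   (1 - p z)^r (1 - p / z)^r, inverts DNB(p, r) up to the factor (1 - p)^(2r).
   Up to the positive factor (1 + p)^(-2r), the hypothesis says exactly that
   y(w) = sum beta(i, l) x(w + i - l) is nonnegative, and y is bounded since x
   is.  Post-processing the output w of DNB(p, r) by a coin showing true with
   probability y(w) / Y, where Y bounds y, gives
   P[true | n] = sum_w DNB(w - n) y(w) / Y = (1 - p)^(2r) x(n) / Y,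
   so x is a nonnegative multiple of a row of this algorithm. *)


Definition multichoose (k u : nat) : nat := 'C(u + k - 1, u).

Lemma multichoose0 k : multichoose k 0 = 1%N.
Proof. by rewrite /multichoose bin0. Qed.

Lemma multichoose0S u : multichoose 0 u.+1 = 0%N.
Proof. by rewrite /multichoose addn0 subn1 bin_small. Qed.

Lemma multichooseSS k u :
  multichoose k.+1 u.+1 = (multichoose k.+1 u + multichoose k u.+1)%N.
Proof.
by rewrite /multichoose !addSn !addnS !subn1 [in LHS]/= binS addnC.
Qed.

Section AlternatingConvolution.
Variable R : pzRingType.

Definition alt_binom_conv (m k u : nat) : R :=
  \sum_(i < u.+1) (-1) ^+ i * 'C(m, i)%:R * (multichoose k (u - i))%:R.

Lemma alt_binom_convSS m k u :
  alt_binom_conv m.+1 k u.+1 = alt_binom_conv m k u.+1 - alt_binom_conv m k u.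
Proof.
rewrite /alt_binom_conv big_ord_recl [in RHS]big_ord_recl /= !bin0 subn0.
under eq_bigr => i _ do rewrite /bump /= add1n subSS binS natrD exprS.
under [X in _ = _ + X - _]eq_bigr => i _ do rewrite /bump /= add1n subSS exprS.
rewrite -addrA; congr (_ + _); rewrite -sumrB; apply: eq_bigr => i _.
by rewrite !mulN1r !mulNr mulrDr mulrDl opprD addrC.
Qed.

Lemma alt_binom_conv_multichoose m k u : (m <= k)%N ->
  alt_binom_conv m k u = (multichoose (k - m) u)%:R.
Proof.
elim: m u => [|m IH] u lemk.
  rewrite /alt_binom_conv big_ord_recl /= subn0 subn0 bin0 !mul1r big1 ?addr0 //.
  by move=> i _; rewrite bin0n mulr0 mul0r.
case: u => [|u].
  by rewrite /alt_binom_conv big_ord1 /= bin0 subn0 !multichoose0 !mul1r.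
rewrite alt_binom_convSS !IH ?(ltnW lemk) // -(subnSK lemk).
by rewrite multichooseSS natrD addrC addKr.
Qed.

End AlternatingConvolution.

Lemma sumr_ord_support (R : nmodType) r u (h : nat -> R) :
  (forall i, (r < i)%N -> h i = 0) ->
  \sum_(i < r.+1) (if (i <= u)%N then h i else 0) = \sum_(i < u.+1) h i.
Proof.
move=> h0.
rewrite (big_ord_widen (r + u).+1 (fun i => if (i <= u)%N then h i else 0));
  last by rewrite ltnS leq_addr.
rewrite [RHS](big_ord_widen (r + u).+1 h); last by rewrite ltnS leq_addl.
rewrite big_mkcond [RHS]big_mkcond /=; apply: eq_bigr => i _.
by rewrite !ltnS; case: (ltnP r i) => ir; case: (leqP i u) => iu //=; rewrite h0.
Qed.

Section NegativeBinomial.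
Variables (R : realType) (p : R).

Definition deconv_coef (r i : nat) : R := 'C(r, i)%:R * (- p) ^+ i.

Lemma nb_deconv r u :
  \sum_(i < r.+1) (if (i <= u)%N then deconv_coef r i * nb_pmf p r (u - i) else 0)
  = (1 - p) ^+ r * (u == 0%N)%:R.
Proof.
transitivity (p ^+ u * (1 - p) ^+ r * \sum_(i < r.+1)
    (if (i <= u)%N then (-1) ^+ i * 'C(r, i)%:R * (multichoose r (u - i))%:R else 0)).
  rewrite mulr_sumr; apply: eq_bigr => i _; case: leqP => iu; last by rewrite mulr0.
  rewrite /deconv_coef /nb_pmf [in LHS]exprNn -(subnKC iu) exprD addKn.
  rewrite /multichoose; ring.
rewrite (@sumr_ord_support _ r u
  (fun i => (-1) ^+ i * 'C(r, i)%:R * (multichoose r (u - i))%:R)); last first.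
  by move=> i ri; rewrite bin_small // mulr0 mul0r.
rewrite -/(alt_binom_conv R r r u) alt_binom_conv_multichoose // subnn.
by case: u => [|u]; rewrite ?multichoose0 ?multichoose0S ?mulr0 // expr0 mul1r mulr1.
Qed.

Hypothesis p01 : 0 <= p < 1.

Lemma nb_pmf_ge0 r k : 0 <= nb_pmf p r k.
Proof. by case/andP: p01 => p0 p1; rewrite /nb_pmf !mulr_ge0 ?exprn_ge0 // subr_ge0 ltW. Qed.

Let mc_series k n := \sum_(u < n) (multichoose k u)%:R * p ^+ u.

Let mc_series_ge0 k n : 0 <= mc_series k n.
Proof. by apply: sumr_ge0 => u _; rewrite mulr_ge0 ?exprn_ge0 //; case/andP: p01. Qed.

Let mc_seriesSS k n : mc_series k.+1 n.+1 = p * mc_series k.+1 n + mc_series k n.+1.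
Proof.
rewrite /mc_series big_ord_recl [in X in _ = _ + X]big_ord_recl !multichoose0 expr0 mulr1.
under eq_bigr => i _ do rewrite lift0 multichooseSS natrD mulrDl.
rewrite big_split /= mulr_sumr addrCA; congr (_ + _).
by apply: eq_bigr => i _; rewrite exprS mulrCA.
Qed.

(* Partial-sum shadow of [(1 - p) (1 - p)^-(k+1) = (1 - p)^-k]. *)
Let mc_series_contract k n : (1 - p) * mc_series k.+1 n <= mc_series k n.
Proof.
case: n => [|n]; first by rewrite /mc_series !big_ord0 mulr0.
have mono : mc_series k.+1 n <= mc_series k.+1 n.+1.
  rewrite /mc_series big_ord_recr /= lerDl mulr_ge0 ?exprn_ge0 //; by case/andP: p01.
move: mono; rewrite mc_seriesSS.
have := mc_series_ge0 k.+1 n; have := mc_series_ge0 k n.+1; case/andP: p01.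
move: (mc_series k.+1 n) (mc_series k n.+1) => a b; nra.
Qed.

Let mc_series_le k n : (1 - p) ^+ k * mc_series k n <= 1.
Proof.
elim: k n => [|k IH] n.
  case: n => [|n]; rewrite /mc_series ?big_ord0 ?mulr0 // big_ord_recl big1 => [|i _].
    by rewrite multichoose0 expr0 !mul1r addr0.
  by rewrite lift0 multichoose0S mul0r.
apply: le_trans (IH n); rewrite exprSr -mulrA ler_wpM2l ?mc_series_contract //.
by rewrite exprn_ge0 // subr_ge0; case/andP: p01 => _ /ltW.
Qed.

Lemma nb_partial_sum_le1 r n : \sum_(u < n) nb_pmf p r u <= 1.
Proof.
apply: le_trans (mc_series_le r n); rewrite /mc_series mulr_sumr.
by apply: ler_sum => u _; rewrite /nb_pmf mulrC mulrA.
Qed.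

Lemma esum_nb_pmf_le1 r : (\esum_(k in [set: nat]) (nb_pmf p r k)%:E <= 1)%E.
Proof.
apply: ge_ereal_sup => _ [A [finA _] <-]; rewrite fsbig_finite //=.
pose n := (\max_(k <- fset_set A) k).+1.
apply: le_trans (lee_sum_fset_nat (fset_set A) n xpredT _ _) _.
- by move=> k _; rewrite lee_fin nb_pmf_ge0.
- move=> k /= kA; rewrite /n big_seq_fsetE /=.
  by rewrite -[k]/(val [`kA]%fset) ltnS leq_bigmax.
by rewrite sumEFin lee_fin big_mkord nb_partial_sum_le1.
Qed.

End NegativeBinomial.

Section EsumReal.
Variables (R : realType) (T : choiceType).
Implicit Types (S : set T).

Lemma esumZl S (c : R) (h : T -> R) : 0 <= c ->
  (\esum_(t in S) (c * h t)%:E = c%:E * \esum_(t in S) (h t)%:E)%E.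
Proof.
move=> c0; rewrite /esum -ereal_supZl //; last first.
  by apply/set0P; exists (\sum_(t \in set0) (h t)%:E)%E; exists set0 => //;
    exact: fsets_set0.
congr ereal_sup; apply/seteqP; split => x /=.
- case=> A [finA AS] <-; exists (\sum_(i \in A) (h i)%:E)%E; first by exists A.
  by rewrite !fsumEFin // !fsbig_finite //= -EFinM mulr_sumr.
- case=> _ [A [finA AS] <-] <-; exists A => //.
  by rewrite !fsumEFin // !fsbig_finite //= -EFinM mulr_sumr.
Qed.

Lemma esum_single S t0 (h : T -> \bar R) :
  S t0 -> (0 <= h t0)%E -> (forall t, t <> t0 -> h t = 0%E) ->
  (\esum_(t in S) h t = h t0)%E.
Proof.
move=> St0 ht0 h0; rewrite (esumID [set t0]); last first.
  by move=> t _; have [->//|/h0->] := pselect (t = t0).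
rewrite [X in (_ + X)%E]esum1 ?adde0; last by move=> t [_ /h0].
have -> : S `&` [set t0] = [set t0] by apply/seteqP; split => t /=; [case | move=> ->].
by rewrite esum_set1.
Qed.

Lemma esum_fineK S (h : T -> R) :
  (forall t, 0 <= h t) -> (\esum_(t in S) (h t)%:E < +oo)%E ->
  (fine (\esum_(t in S) (h t)%:E))%:E = (\esum_(t in S) (h t)%:E)%E.
Proof.
move=> h0 hfin; rewrite fineK // ge0_fin_numE //.
by apply: esum_ge0 => t _; rewrite lee_fin.
Qed.

Section FiniteCombination.
Variables (J : finType) (S : set T) (f : J -> T -> R).
Hypotheses (f_ge0 : forall j t, 0 <= f j t)
           (f_fin : forall j, (\esum_(t in S) (f j t)%:E < +oo)%E).

Let esum_pos_comb (b : J -> R) : (forall j, 0 <= b j) ->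
  (\esum_(t in S) (\sum_j b j * f j t)%:E =
   (\sum_j b j * fine (\esum_(t in S) (f j t)%:E))%:E)%E.
Proof.
move=> b0; under eq_esum do rewrite -sumEFin.
rewrite esum_sum; last by move=> t j _ _; rewrite lee_fin mulr_ge0.
rewrite -sumEFin; apply: eq_bigr => j _.
by rewrite esumZl // EFinM esum_fineK.
Qed.

(* A real combination with coefficients of both signs: split [a] into its
   positive and negative parts and cancel the (finite) negative part. *)
Lemma esum_lincomb (a : J -> R) (g : T -> R) :
  (forall t, 0 <= g t) -> (forall t, S t -> \sum_j a j * f j t = g t) ->
  (\esum_(t in S) (g t)%:E = (\sum_j a j * fine (\esum_(t in S) (f j t)%:E))%:E)%E.
Proof.
move=> g0 fg.
pose ap j := if 0 <= a j then a j else 0.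
pose an j := if 0 <= a j then 0 else - a j.
have ap0 j : 0 <= ap j by rewrite /ap; case: ifP.
have an0 j : 0 <= an j by rewrite /an; case: (leP 0 (a j)) => // /ltW; rewrite oppr_ge0.
have aE j : a j = ap j - an j by rewrite /ap /an; case: ifP; rewrite ?subr0 ?sub0r ?opprK.
have cancel_neg : (\esum_(t in S) (g t)%:E +
    (\sum_j an j * fine (\esum_(t in S) (f j t)%:E))%:E =
    (\sum_j ap j * fine (\esum_(t in S) (f j t)%:E))%:E)%E.
  rewrite -!esum_pos_comb // -esumD => [|t _|t _]; last 2 first.
  - by rewrite lee_fin.
  - by rewrite lee_fin sumr_ge0 // => j _; rewrite mulr_ge0.
  apply: eq_esum => t St; rewrite -EFinD -fg // -big_split /=.
  by congr EFin; apply: eq_bigr => j _; rewrite aE mulrBl subrK.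
rewrite -[LHS](@addeK _ (\sum_j an j * fine (\esum_(t in S) (f j t)%:E))%:E) //.
rewrite cancel_neg -EFinB -sumrB; congr EFin; apply: eq_bigr => j _.
by rewrite -mulrBl -aE.
Qed.

End FiniteCombination.
End EsumReal.

Definition pairs_with_diff (d : int) : set (nat * nat) :=
  [set ij | ij.1%:Z - ij.2%:Z = d].

Section DifferencedNegativeBinomial.
Variables (R : realType) (p : R) (r : nat).
Hypothesis p01 : 0 <= p < 1.

Let nb2 (i j : nat) : R := nb_pmf p r i * nb_pmf p r j.

Let nb2_ge0 i j : 0 <= nb2 i j.
Proof. by rewrite mulr_ge0 ?nb_pmf_ge0. Qed.

Let esum_nb2_le1 : (\esum_(ij in [set: nat * nat]) (nb2 ij.1 ij.2)%:E <= 1)%E.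
Proof.
have -> : [set: nat * nat] = [set: nat] `*`` (fun=> [set: nat]) by apply/seteqP.
rewrite -(esum_esum (a := fun i j => (nb2 i j)%:E)); last by move=> i j _ _; rewrite lee_fin.
apply: le_trans (esum_nb_pmf_le1 p01 r); apply: le_esum => i _.
rewrite esumZl ?nb_pmf_ge0 // -[leRHS]mule1.
by rewrite lee_wpmul2l ?lee_fin ?nb_pmf_ge0 ?esum_nb_pmf_le1.
Qed.

Let esum_nb2_fin d : (\esum_(ij in pairs_with_diff d) (nb2 ij.1 ij.2)%:E < +oo)%E.
Proof.
apply: le_lt_trans (ltry 1); apply: le_trans esum_nb2_le1.
by rewrite esum_mkcond; apply: le_esum => ij _; case: ifP; rewrite ?lee_fin.
Qed.

Lemma dnb_pmfE d :
  (dnb_pmf p r d)%:E = (\esum_(ij in pairs_with_diff d) (nb2 ij.1 ij.2)%:E)%E.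
Proof.
by rewrite /dnb_pmf -/(pairs_with_diff d) esum_fineK // => ij; exact: nb2_ge0.
Qed.

Lemma dnb_pmf_ge0 d : 0 <= dnb_pmf p r d.
Proof. by apply: fine_ge0; apply: esum_ge0 => ij _; rewrite lee_fin mulr_ge0 ?nb_pmf_ge0. Qed.

Lemma esum_dnb_pmf_le1 (c : int) :
  (\esum_(m in [set: int]) (dnb_pmf p r (m - c))%:E <= 1)%E.
Proof.
under eq_esum do rewrite dnb_pmfE.
rewrite (esum_esum (a := fun _ ij => (nb2 ij.1 ij.2)%:E)); last first.
  by move=> m ij _ _; rewrite lee_fin.
apply: le_trans esum_nb2_le1.
rewrite (reindex_esum ([set: int] `*`` (fun m => pairs_with_diff (m - c))) _ snd) //.
split.
- by [].
- move=> [m ij] [m' ij'] /set_mem [_ h] /set_mem [_ h'] /= e; subst ij'.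
  by congr pair; move: h h'; rewrite /pairs_with_diff /=; lia.
- move=> ij _; exists (ij.1%:Z - ij.2%:Z + c, ij) => //.
  by split => //; rewrite /pairs_with_diff /= addrK.
Qed.

Definition deconv_weight (il : 'I_r.+1 * 'I_r.+1) : R :=
  deconv_coef p r il.1 * deconv_coef p r il.2.

Definition ord_diff (il : 'I_r.+1 * 'I_r.+1) : int := il.1%:Z - il.2%:Z.

Let nb2_shift (il : 'I_r.+1 * 'I_r.+1) (ij : nat * nat) : R :=
  if (il.1 <= ij.1)%N && (il.2 <= ij.2)%N then nb2 (ij.1 - il.1) (ij.2 - il.2) else 0.

Let nb2_shift_ge0 il ij : 0 <= nb2_shift il ij.
Proof. by rewrite /nb2_shift; case: ifP. Qed.

Let esum_nb2_shift d il :
  (\esum_(ij in pairs_with_diff d) (nb2_shift il ij)%:E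
   = (dnb_pmf p r (d - ord_diff il))%:E)%E.
Proof.
pose Q := [set ij : nat * nat | (il.1 <= ij.1)%N /\ (il.2 <= ij.2)%N].
rewrite (esumID Q) => [|ij _]; last by rewrite lee_fin.
rewrite [X in (_ + X)%E]esum1 ?adde0; last first.
  by move=> [i j] [_ /= nQ]; rewrite /nb2_shift /=; case: ifP => // /andP.
rewrite dnb_pmfE (reindex_esum (pairs_with_diff (d - ord_diff il)) _
  (fun ij => (ij.1 + il.1, ij.2 + il.2)%N)).
  by apply: eq_esum => ij _; rewrite /nb2_shift /= !leq_addl !addnK.
split.
- move=> [i j]; rewrite /pairs_with_diff /ord_diff /= => h.
  by split; [rewrite !PoszD /=; lia | split; rewrite leq_addl].
- by move=> [i j] [i' j'] _ _ /= [] /addIn -> /addIn ->.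
- move=> [i j] [/= h [h1 h2]]; exists (i - il.1, j - il.2)%N; last by rewrite /= !subnK.
  by rewrite /pairs_with_diff /ord_diff /= in h h1 h2 *; lia.
Qed.

Let sum_nb2_shift ij :
  \sum_il deconv_weight il * nb2_shift il ij
  = ((1 - p) ^+ r * (ij.1 == 0%N)%:R) * ((1 - p) ^+ r * (ij.2 == 0%N)%:R).
Proof.
rewrite -!nb_deconv mulr_suml; under [RHS]eq_bigr do rewrite mulr_sumr.
rewrite pair_bigA /=; apply: eq_bigr => [[i j]] _ /=.
rewrite /nb2_shift /deconv_weight /nb2 /=.
by case: (leqP i ij.1) => _; case: (leqP j ij.2) => _; rewrite /= ?mulr0 ?mul0r //; ring.
Qed.

Lemma dnb_deconv d :
  \sum_il deconv_weight il * dnb_pmf p r (d - ord_diff il) = (1 - p) ^+ (2 * r) * (d == 0)%:R.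
Proof.
pose g (ij : nat * nat) : R :=
  ((1 - p) ^+ r * (ij.1 == 0%N)%:R) * ((1 - p) ^+ r * (ij.2 == 0%N)%:R).
have g0 ij : 0 <= g ij.
  by rewrite /g !mulr_ge0 ?exprn_ge0 // subr_ge0; case/andP: p01 => _ /ltW.
have gE : (\esum_(ij in pairs_with_diff d) (g ij)%:E =
    (\sum_il deconv_weight il * dnb_pmf p r (d - ord_diff il))%:E)%E.
  have fin il : (\esum_(ij in pairs_with_diff d) (nb2_shift il ij)%:E < +oo)%E.
    by rewrite esum_nb2_shift ltry.
  rewrite (esum_lincomb nb2_shift_ge0 fin (a := deconv_weight) g0) => [|ij _].
    by congr EFin; apply: eq_bigr => il _; rewrite esum_nb2_shift.
  exact: sum_nb2_shift.
apply: EFin_inj; rewrite -gE.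
have [->|dn0] := eqVneq d 0.
  rewrite (esum_single (t0 := (0, 0)%N)) ?lee_fin //.
    by rewrite /g /= mul2n -addnn exprD; congr EFin; ring.
  by case=> [[|i] [|j]] // _; rewrite /g /= ?mulr0 ?mul0r.
rewrite esum1 ?mulr0 // => -[[|i] [|j]] //=; rewrite /g /= ?mulr0 ?mul0r //.
by rewrite /pairs_with_diff /= => d0; move: dn0; rewrite -d0 eqxx.
Qed.

End DifferencedNegativeBinomial.

Arguments deconv_weight {R} p r il.

Lemma exprz_N1_diff (R : fieldType) (a b : nat) :
  (-1 : R) ^ (a%:Z - b%:Z) = (-1) ^+ a * (-1) ^+ b.
Proof. by rewrite expfzDr ?oppr_eq0 ?oner_eq0 // -invr_expz invr_sign. Qed.

Lemma binom_pmf_odds (R : realType) (p : R) r a : 0 <= p -> (a <= r)%N ->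
  binom_pmf (p / (1 + p)) r a = 'C(r, a)%:R * p ^+ a / (1 + p) ^+ r.
Proof.
move=> p0 ar; have p1 : 1 + p != 0 by rewrite gt_eqF // ltr_pwDl.
rewrite /binom_pmf; have -> : 1 - p / (1 + p) = (1 + p)^-1 by field.
by rewrite expr_div_n exprVn -!mulrA -invfM -exprD subnKC.
Qed.

Lemma fB_weighted_sumE (R : realType) (p : R) r (x : int -> R) k : 0 <= p ->
  \sum_(0 <= i < (2 * r).+1)
     (-1) ^ (i%:Z - r%:Z) * fB (p / (1 + p)) r (i%:Z - r%:Z) * x (k + (i%:Z - r%:Z))
  = ((1 + p) ^+ (2 * r))^-1 * \sum_il deconv_weight p r il * x (k + ord_diff il).
Proof.
move=> p0; set q := p / (1 + p); rewrite /fB.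
under eq_bigr => i _ do rewrite mulr_sumr mulr_suml.
under eq_bigr => i _ do under eq_bigr => a _ do rewrite mulr_sumr mulr_suml.
rewrite exchange_big /=; under eq_bigr => a _ do rewrite exchange_big /=.
rewrite pair_bigA /= mulr_sumr; apply: eq_bigr => -[a b] _ /=.
have ar : (a <= r)%N := ltn_ord a; have br : (b <= r)%N := ltn_ord b.
have diffE i : (a%:Z - b%:Z == i%:Z - r%:Z) = (i == a + r - b)%N by apply/eqP/eqP; lia.
transitivity (\sum_(0 <= i < (2 * r).+1 | (i == a + r - b)%N)
    ((-1) ^ (a%:Z - b%:Z) * (binom_pmf q r a * binom_pmf q r b) * x (k + (a%:Z - b%:Z)))).
  rewrite [RHS]big_mkcond; apply: eq_bigr => i _; rewrite -diffE.
  by case: eqP => [<-|_]; rewrite ?mulr0 ?mul0r.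
rewrite big_nat1_eq ifT; last by apply/andP; split; lia.
rewrite exprz_N1_diff !binom_pmf_odds // /deconv_weight /deconv_coef /ord_diff /=.
rewrite [(- p) ^+ a]exprNn [(- p) ^+ b]exprNn mul2n -addnn exprD invfM.
move: ((1 + p) ^+ r)^-1 ((-1) ^+ a : R) ((-1) ^+ b : R) (p ^+ a) (p ^+ b) => u sa sb pa pb.
ring.
Qed.

Lemma esum_int_shift (R : realType) (F : int -> \bar R) (c : int) :
  (\esum_(w in [set: int]) F w = \esum_(m in [set: int]) F (m - c)%R)%E.
Proof.
apply: reindex_esum; split=> //; first by move=> m m' _ _ /addIr.
by move=> w _; exists (w + c) => //=; rewrite addrK.
Qed.

Lemma ler_norm_sum_weighted (R : numDomainType) (I : finType) (a v : I -> R) (B : R) :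
  (forall i, `|v i| <= B) -> `|\sum_i a i * v i| <= \sum_i `|a i| * B.
Proof.
move=> vB; apply: le_trans (ler_norm_sum _ _ _) _; apply: ler_sum => i _.
by rewrite normrM ler_wpM2l.
Qed.

Lemma sum_pairE (R : nmodType) (I J : finType) (G : I * J -> R) :
  \sum_(ij : I * J) G ij = \sum_(i : I) \sum_(j : J) G (i, j).
Proof. by rewrite pair_big; apply: eq_bigr => -[]. Qed.

Section DeconvolutionOfRows.
Variables (R : realType) (p : R) (r : nat).
Hypothesis p01 : 0 <= p < 1.

Let K := (1 - p) ^+ (2 * r).

Lemma esum_dnb_bounded_fin (z : int -> R) (B : R) (c : int) :
  (forall m, 0 <= z m <= B) ->
  (\esum_(m in [set: int]) (dnb_pmf p r (m - c) * z m)%:E < +oo)%E.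
Proof.
move=> zB; have B0 : 0 <= B by case/andP: (zB 0) => /le_trans; apply.
apply: (@le_lt_trans _ _ (B%:E * 1)%E); last by rewrite mule1 ltry.
apply: (@le_trans _ _ (\esum_(m in [set: int]) (B * dnb_pmf p r (m - c))%:E)%E).
  apply: le_esum => m _; rewrite lee_fin mulrC ler_wpM2r ?dnb_pmf_ge0 //.
  by case/andP: (zB m).
by rewrite esumZl // lee_wpmul2l ?lee_fin ?esum_dnb_pmf_le1.
Qed.

Let esum_dnb_shift (z : int -> R) n (o : int) :
  (\esum_(w in [set: int]) (dnb_pmf p r (w - n) * z (w + o))%:E =
   \esum_(m in [set: int]) (dnb_pmf p r (m - (n + o)) * z m)%:E)%E.
Proof.
rewrite (esum_int_shift _ o); apply: eq_esum => m _.
by rewrite subrK opprD addrA addrAC.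
Qed.

Lemma dnb_deconv_row (z : int -> R) (B : R) n :
  (forall m, 0 <= z m <= B) ->
  \sum_il deconv_weight p r il *
     fine (\esum_(w in [set: int]) (dnb_pmf p r (w - n) * z (w + ord_diff il))%:E)
  = K * z n.
Proof.
move=> zB; have z0 m : 0 <= z m by case/andP: (zB m).
have K0 : 0 <= K by rewrite exprn_ge0 // subr_ge0; case/andP: p01 => _ /ltW.
under eq_bigr do rewrite esum_dnb_shift.
apply: EFin_inj; rewrite -(esum_lincomb
  (f := fun il m => dnb_pmf p r (m - (n + ord_diff il)) * z m) _
  (fun il => esum_dnb_bounded_fin _ zB) (g := fun m => K * (m == n)%:R * z m)) => [||m|m _].
- rewrite (esum_single (t0 := n)) ?lee_fin ?eqxx ?mulr1 ?mulr_ge0 //.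
  by move=> m /eqP/negbTE ->; rewrite mulr0 mul0r.
- by move=> il m; rewrite mulr_ge0 ?dnb_pmf_ge0.
- by rewrite !mulr_ge0.
rewrite -[LHS]/(\sum_il deconv_weight p r il * (dnb_pmf p r (m - (n + ord_diff il)) * z m)).
under eq_bigr do rewrite mulrA opprD addrA.
by rewrite -mulr_suml dnb_deconv // subr_eq0.
Qed.

Lemma esum_dnb_deconv_row (x : int -> R) (B : R) n :
  (forall k, `|x k| <= B) ->
  (forall w, 0 <= \sum_il deconv_weight p r il * x (w + ord_diff il)) ->
  (\esum_(w in [set: int])
     (dnb_pmf p r (w - n) * \sum_il deconv_weight p r il * x (w + ord_diff il))%:E
   = (K * x n)%:E)%E.
Proof.
move=> xB y0.
pose xs (s : bool) m := if s then Num.max (x m) 0 else Num.max (- x m) 0.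
have xsB s m : 0 <= xs s m <= B.
  have := xB m; rewrite /xs; case: s; rewrite ge_max le_max lexx orbT /=.
    by move=> xmB; rewrite (le_trans (ler_norm _) xmB) (le_trans (normr_ge0 _) xmB).
  by move=> xmB; rewrite (le_trans (ler_norm _)) ?normrN // (le_trans (normr_ge0 _) xmB).
have xE m : x m = xs true m - xs false m.
  by rewrite /xs !maxEle oppr_le0; case: ltgtP => h; rewrite ?subr0 ?sub0r ?opprK.
pose f (j : ('I_r.+1 * 'I_r.+1) * bool) w := dnb_pmf p r (w - n) * xs j.2 (w + ord_diff j.1).
have f_ge0 j w : 0 <= f j w.
  by rewrite mulr_ge0 ?dnb_pmf_ge0 //; case/andP: (xsB j.2 (w + ord_diff j.1)).
have f_fin j : (\esum_(w in [set: int]) (f j w)%:E < +oo)%E.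
  by rewrite esum_dnb_shift (esum_dnb_bounded_fin _ (xsB j.2)).
rewrite (esum_lincomb f_ge0 f_fin
  (a := fun j => deconv_weight p r j.1 * (if j.2 then 1 else -1))) => [|w|w _].
- congr EFin; rewrite sum_pairE xE mulrBr -(dnb_deconv_row _ (xsB true)).
  rewrite -(dnb_deconv_row _ (xsB false)) -sumrB; apply: eq_bigr => il _.
  by rewrite big_bool /= /f; ring.
- by rewrite mulr_ge0 ?dnb_pmf_ge0.
rewrite sum_pairE mulr_sumr; apply: eq_bigr => il _.
by rewrite big_bool /= /f xE; ring.
Qed.

End DeconvolutionOfRows.

Definition bernoulli_kernel (R : realType) (Omega : choiceType) (q : Omega -> R) :
  Omega -> bool -> R :=
  fun w b => if b then q w else 1 - q w.

Lemma is_kernel_bernoulli (R : realType) (Omega : choiceType) (q : Omega -> R) :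
  (forall w, 0 <= q w <= 1) -> is_kernel (bernoulli_kernel q).
Proof.
move=> q01 w; have /andP[q0 q1] := q01 w.
split; first by case; rewrite /bernoulli_kernel ?subr_ge0.
rewrite (esumID [set true]); last by case=> _; rewrite lee_fin /bernoulli_kernel ?subr_ge0.
have -> : ~` [set true] = [set false] by apply/seteqP; split => -[] //=.
by rewrite !setTI !esum_set1 ?lee_fin /bernoulli_kernel ?subr_ge0 // -EFinD addrC subrK.
Qed.

Theorem theorem6 (R : realType) (p : R) (r : nat) (x : int -> R) :
  0 < p < 1 -> (0 < r)%N ->
  (exists B : R, forall k, `|x k| <= B) ->
  (forall k : int,
     0 <= \sum_(0 <= i < (2 * r).+1)
            (-1) ^ (i%:Z - r%:Z) * fB (p / (1 + p)) r (i%:Z - r%:Z)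
              * x (k + (i%:Z - r%:Z))) ->
  rowcone_DNB p r x.
Proof.
(* The construction does not use [0 < r]. *)
move=> /andP[p0 p1] _ [B xB] hyp; have p01 : 0 <= p < 1 by rewrite ltW.
pose y w := \sum_il deconv_weight p r il * x (w + ord_diff il).
have y0 w : 0 <= y w.
  move: (hyp w); rewrite fB_weighted_sumE ?(ltW p0) // pmulr_rge0 //.
  by rewrite invr_gt0 exprn_gt0 // ltr_pwDr.
pose Y := \sum_il `|deconv_weight p r il| * B + 1.
have Y0 : 0 < Y.
  by rewrite ltr_pwDr // sumr_ge0 // => il _; rewrite mulr_ge0 // (le_trans _ (xB 0)).
have yY w : y w <= Y.
  apply: le_trans (ler_norm _) _.
  by rewrite (le_trans (ler_norm_sum_weighted _ (fun=> xB _))) ?lerDl.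
pose K := (1 - p) ^+ (2 * r).
have K0 : 0 < K by rewrite exprn_gt0 // subr_gt0.
have q01 w : 0 <= y w / Y <= 1 by rewrite divr_ge0 ?(ltW Y0) //= ler_pdivrMr // mul1r.
exists (Y / K), bool, (postproc (bernoulli_kernel (fun w => y w / Y)) (M_DNB p r)), true.
split; first by rewrite divr_ge0 ?ltW.
split; first exact: CNF_post (CNF_base _ _) (is_kernel_bernoulli q01).
move=> n; rewrite /postproc /M_DNB /bernoulli_kernel.
under eq_esum do rewrite mulrA mulrC.
rewrite esumZl ?invr_ge0 ?(ltW Y0) // (esum_dnb_deconv_row p01 n xB y0) /=.
by rewrite -/K; field; rewrite !gt_eqF.
Qed.
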